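(* Let $B=(B,+,0)$ be a unitary magma and $(X,\varphi)$ a $B$-action. The set $$X\rtimes_\varphi B=\{(x,b)\in X\times B\mid \varphi(x,0,0,b)=x\}$$ is closed under the binary operation on $X\times B$ given by $(x,b)+(x',b')=(\varphi(x,b,x',b'),\,b+b')$, and $(X\rtimes_\varphi B,+,(0,0))$ is a unitary magma.
   Context: A unitary magma is a set with a binary operation $+$ and an element $0$ with $b+0=b=0+b$ for all $b$. A $B$-action is a pair $(X,\varphi)$ with $X$ a set and $\varphi\colon X\times B\times X\times B\to X$ a map such that: (1) there is an element $0\in X$ with $\varphi(x,0,0,0)=x=\varphi(0,0,x,0)$ for all $x\in X$; (2) $\varphi(x,b,0,0)=\varphi(x,0,0,b)=\varphi(0,0,x,b)$ for all $x\in X,b\in B$; (3) $\varphi(0,b,0,b')=0$ for all $b,b'\in B$; (4) writing $\varphi_{00}(x,b)=\varphi(x,0,0,b)$, for all $x,x'\in X$, $b,b'\in B$: $\varphi(x,b,x',b')=\varphi_{00}\big(\varphi(\varphi_{00}(x,b),b,\varphi_{00}(x',b'),b'),\,b+b'\big)$. *)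

Definition unitary_magma (B : Type) (add : B -> B -> B) (z : B) : Prop :=
  forall b : B, add b z = b /\ add z b = b.

Definition phi00 {B X : Type} (zB : B) (x0 : X)
  (phi : X -> B -> X -> B -> X) (x : X) (b : B) : X :=
  phi x zB x0 b.

(* (X, phi) is a B-action with distinguished element x0 (the "0" of X). *)
Definition B_action (B : Type) (add : B -> B -> B) (zB : B)
  (X : Type) (phi : X -> B -> X -> B -> X) (x0 : X) : Prop :=
  (* (1) *) (forall x : X, phi x zB x0 zB = x /\ phi x0 zB x zB = x) /\
  (* (2) *) (forall (x : X) (b : B),
                phi x b x0 zB = phi x zB x0 b /\ phi x zB x0 b = phi x0 zB x b) /\
  (* (3) *) (forall b b' : B, phi x0 b x0 b' = x0) /\
  (* (4) *) (forall (x x' : X) (b b' : B),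
                phi x b x' b' =
                phi00 zB x0 phi
                  (phi (phi00 zB x0 phi x b) b (phi00 zB x0 phi x' b') b')
                  (add b b')).

Definition semidirect_carrier {B X : Type} (zB : B) (x0 : X)
  (phi : X -> B -> X -> B -> X) (p : X * B) : Prop :=
  phi (fst p) zB x0 (snd p) = fst p.

Definition semidirect_add {B X : Type} (add : B -> B -> B)
  (phi : X -> B -> X -> B -> X) (p q : X * B) : X * B :=
  (phi (fst p) (snd p) (fst q) (snd q), add (snd p) (snd q)).


(* Instantiating axiom (4) at [x' = 0], [b = 0] and simplifying with (1), (3)
   and [0 + c = c] shows that each [phi00 (-) c] is idempotent.  Axiom (4)
   writes every [phi x b x' b'] as [phi00 (-) (b + b')] of something, so the
   sum of any two pairs lands in [X ⋊ B].  The carrier equation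
   [phi00 x b = x] together with axiom (2) makes [(0, 0)] a two-sided
   identity there. *)

Section SemidirectProduct.

Variables (B : Type) (add : B -> B -> B) (zB : B).
Variables (X : Type) (phi : X -> B -> X -> B -> X) (x0 : X).

Hypothesis magma : unitary_magma B add zB.
Hypothesis action : B_action B add zB X phi x0.

Lemma phi00_idem (y : X) (c : B) :
  phi00 zB x0 phi (phi00 zB x0 phi y c) c = phi00 zB x0 phi y c.
Proof.
  destruct action as [act_unit [_ [act_zero act_decomp]]].
  pose proof (act_decomp y x0 zB c) as E.
  unfold phi00 in *.
  rewrite (proj1 (act_unit y)), act_zero, (proj2 (magma c)) in E.
  symmetry; exact E.
Qed.

Lemma semidirect_carrier_add (p q : X * B) :
  semidirect_carrier zB x0 phi (semidirect_add add phi p q).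
Proof.
  destruct action as [_ [_ [_ act_decomp]]].
  destruct p as [x b], q as [x' b'].
  unfold semidirect_carrier, semidirect_add; simpl.
  rewrite (act_decomp x x' b b').
  apply phi00_idem.
Qed.

Lemma semidirect_carrier_zero : semidirect_carrier zB x0 phi (x0, zB).
Proof.
  destruct action as [act_unit _].
  exact (proj1 (act_unit x0)).
Qed.

Lemma semidirect_addp0 (p : X * B) :
  semidirect_carrier zB x0 phi p -> semidirect_add add phi p (x0, zB) = p.
Proof.
  destruct action as [_ [act_swap _]].
  destruct p as [x b]; unfold semidirect_carrier, semidirect_add; simpl.
  intros Hp.
  rewrite (proj1 (act_swap x b)), Hp, (proj1 (magma b)).
  reflexivity.
Qed.

Lemma semidirect_add0p (p : X * B) :
  semidirect_carrier zB x0 phi p -> semidirect_add add phi (x0, zB) p = p.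
Proof.
  destruct action as [_ [act_swap _]].
  destruct p as [x b]; unfold semidirect_carrier, semidirect_add; simpl.
  intros Hp.
  rewrite <- (proj2 (act_swap x b)), Hp, (proj2 (magma b)).
  reflexivity.
Qed.

End SemidirectProduct.

Theorem proposition3p2 (B : Type) (add : B -> B -> B) (zB : B)
  (X : Type) (phi : X -> B -> X -> B -> X) (x0 : X) :
  unitary_magma B add zB ->
  B_action B add zB X phi x0 ->
  (* closure under the operation *)
  (forall p q : X * B,
      semidirect_carrier zB x0 phi p -> semidirect_carrier zB x0 phi q ->
      semidirect_carrier zB x0 phi (semidirect_add add phi p q)) /\
  (* (0,0) lies in X ⋊ B and is a two-sided identity there *)
  semidirect_carrier zB x0 phi (x0, zB) /\
  (forall p : X * B, semidirect_carrier zB x0 phi p ->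
      semidirect_add add phi p (x0, zB) = p /\
      semidirect_add add phi (x0, zB) p = p).
Proof.
  intros magma action.
  split; [| split].
  - intros p q _ _. apply semidirect_carrier_add; assumption.
  - eapply semidirect_carrier_zero; eassumption.
  - intros p Hp. split.
    + apply semidirect_addp0; assumption.
    + apply semidirect_add0p; assumption.
Qed.
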